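(* Let $n\ge3$ and let $k\ne\mathbb{F}_2$ be a field. Let $S=k[x_{i,j}]_{1\le i<j\le 2n}$, setting $x_{j,i}:=x_{i,j}$ for $i<j$, and let $f=\sum_{M}a_M\prod_{\{i,j\}\in M}x_{i,j}$, the sum over all perfect matchings $M$ of $\{1,\dots,2n\}$, with all $a_M\in k^*$ (equivalently, $f$ is of the form $\sum_{\sigma\in S_{2n}}a_\sigma x_{\sigma(1),\sigma(2)}\cdots x_{\sigma(2n-1),\sigma(2n)}$ in which every such monomial has nonzero total coefficient). Then $f$ is not a direct sum.
   Context: A form $f$ in a polynomial ring over $k$ is a direct sum if, after an invertible linear change of the variables, it can be written as $f_1+f_2$ with $f_1,f_2$ nonzero forms in disjoint sets of the new variables. *)

From HB Require Import structures.
From mathcomp Require Import all_boot all_order all_algebra.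
From mathcomp Require Import mpoly.
Set Implicit Arguments. Unset Strict Implicit. Unset Printing Implicit Defensive.
Import Order.TTheory GRing.Theory.
Local Open Scope ring_scope.

Definition only_vars (k : fieldType) (m : nat) (I : {set 'I_m}) (p : {mpoly k[m]}) : Prop :=
  forall mon : 'X_{1..m}, mon \in msupp p -> forall i : 'I_m, i \notin I -> mon i = 0%N.

Definition lin_change (k : fieldType) (m : nat) (A : 'M[k]_m) : m.-tuple {mpoly k[m]} :=
  [tuple \sum_(j < m) A i j *: 'X_j | i < m].

Definition direct_sum (k : fieldType) (m : nat) (f : {mpoly k[m]}) : Prop :=
  exists (A : 'M[k]_m) (I : {set 'I_m}) (f1 f2 : {mpoly k[m]}) (d1 d2 : nat),
    A \in unitmx /\ f1 != 0 /\ f2 != 0 /\ f1 \is d1.-homog /\ f2 \is d2.-homog /\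
    only_vars I f1 /\ only_vars (~: I) f2 /\ f \mPo lin_change A = f1 + f2.

(* Variables of S = k[x_{i,j}]_{1<=i<j<=2n} are indexed by the 2-element
   subsets {i,j} of 'I_(2n) (so x_{j,i} = x_{i,j} automatically). *)
Definition edge (N : nat) := {e : {set 'I_N} | #|e| == 2%N}.
Definition nvars (N : nat) : nat := #|{: edge N}|.

(* the variable x_e for a 2-subset e (0 if e is not a 2-subset, never used) *)
Definition xe (k : fieldType) (N : nat) (e : {set 'I_N}) : {mpoly k[nvars N]} :=
  oapp (fun p : edge N => 'X_(enum_rank p)) 0 (insub e).

Definition perfect_matching (N : nat) (M : {set {set 'I_N}}) : bool :=
  [forall e in M, #|e| == 2%N] &&
  [forall v : 'I_N, #|[set e in M | v \in e]| == 1%N].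

Definition matching_poly (k : fieldType) (N : nat) (a : {set {set 'I_N}} -> k)
  : {mpoly k[nvars N]} :=
  \sum_(M : {set {set 'I_N}} | perfect_matching M) a M *: \prod_(e in M) xe k e.

(* Suppose f(Ax) = f1 + f2 with f1 in the new variables indexed by I and f2 in the
   others. Then d_i d_j (f o A) = 0 for i in I and j outside I, so for every monomial mu the
   matrix H_mu of mu-coefficients of the Hessian of f satisfies H_mu P = P^T H_mu, where
   P = A diag(1_I) A^-1 is the projection onto the first summand. For the matching form take
   mu to be a perfect matching of the complement of two disjoint edges r, s: the nonzero
   entries of H_mu sit exactly at the pairs of disjoint edges covering r u s. Comparing
   entries of H_mu P and P^T H_mu forces P to be scalar once 2n >= 6, so I is empty or
   everything; then one summand is a nonzero constant, which is impossible since f has no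
   constant term and the other summand is a form. *)

From HB Require Import structures.
From mathcomp Require Import all_boot all_order all_algebra.
From mathcomp Require Import mpoly zify.

Set Implicit Arguments.
Unset Strict Implicit.
Unset Printing Implicit Defensive.

Import GRing.Theory.
Local Open Scope ring_scope.

Section Composition.
Variable R : comNzRingType.

Lemma comp_mpolyA n l m (p : {mpoly R[n]})
    (lq : n.-tuple {mpoly R[l]}) (lr : l.-tuple {mpoly R[m]}) :
  (p \mPo lq) \mPo lr = p \mPo [tuple tnth lq i \mPo lr | i < n].
Proof.
rewrite [p \mPo lq]comp_mpolyE [RHS]comp_mpolyE raddf_sum /=.
apply: eq_bigr => mu _; rewrite comp_mpolyZ rmorph_prod /=.
by congr (_ *: _); apply: eq_bigr => i _; rewrite rmorphXn /= tnth_map tnth_ord_tuple.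
Qed.

Lemma mderiv_comp_mpoly n l (lq : n.-tuple {mpoly R[l]}) (j : 'I_l) (p : {mpoly R[n]}) :
  (p \mPo lq)^`M(j) = \sum_(i < n) (p^`M(i) \mPo lq) * (tnth lq i)^`M(j).
Proof.
pose chain (q : {mpoly R[n]}) :=
  (q \mPo lq)^`M(j) = \sum_(i < n) (q^`M(i) \mPo lq) * (tnth lq i)^`M(j).
have chainD q r : chain q -> chain r -> chain (q + r).
  rewrite /chain comp_mpolyD mderivD => -> ->; rewrite -big_split /=.
  by apply: eq_bigr => i _; rewrite mderivD comp_mpolyD mulrDl.
have chainM q r : chain q -> chain r -> chain (q * r).
  rewrite /chain rmorphM /= mderivM => -> ->.
  rewrite mulr_suml mulr_sumr -big_split /=; apply: eq_bigr => i _.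
  rewrite mderivM comp_mpolyD !rmorphM /= mulrDl -!mulrA.
  by congr (_ * _ + _); rewrite mulrC.
have chainC c : chain c%:MP.
  by rewrite /chain comp_mpolyC mderivC big1 // => i _; rewrite mderivC comp_mpolyC mul0r.
have chainX i : chain 'X_i.
  rewrite /chain comp_mpolyXU (bigD1 i) //= big1 => [|i' /negbTE neq]; last first.
    by rewrite mderivX mnm1E eq_sym neq scale0r comp_mpoly0 mul0r.
  rewrite mderivX mnm1E eqxx scale1r addr0 -tnth_nth.
  suff -> : (U_(i) - U_(i))%MM = 0%MM by rewrite mpolyX0 comp_mpoly1 mul1r.
  by apply/mnmP => i'; rewrite mnmBE subnn mnm0E.
have chainXm mu : chain 'X_[mu].
  rewrite mpolyXE_id; elim/big_ind: _ => //; first by rewrite -mpolyC1; apply: chainC.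
  move=> i _; elim: (mu i) => [|e IHe]; first by rewrite expr0 -mpolyC1; apply: chainC.
  by rewrite exprS; apply: chainM.
elim/mpolyind: p => [|c mu p _ _ IHp]; first by rewrite -mpolyC0; apply: chainC.
by apply: chainD => //; rewrite -mul_mpolyC; apply: chainM.
Qed.
End Composition.

Section LinearChange.
Variables (k : fieldType) (m : nat).
Implicit Types (A B : 'M[k]_m) (p : {mpoly k[m]}).

Lemma tnth_lin_change A i : tnth (lin_change A) i = \sum_(j < m) A i j *: 'X_j.
Proof. by rewrite tnth_mktuple. Qed.

Lemma mderiv_lin_change_var A i j : (tnth (lin_change A) i)^`M(j) = (A i j)%:MP.
Proof.
rewrite tnth_lin_change raddf_sum (bigD1 j) //= big1 => [|j' /negbTE neq]; last first.
  by rewrite mderivZ mderivX mnm1E neq scale0r scaler0.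
rewrite mderivZ mderivX mnm1E eqxx scale1r addr0 -mul_mpolyC.
suff -> : (U_(j) - U_(j))%MM = 0%MM by rewrite mpolyX0 mulr1.
by apply/mnmP => j'; rewrite mnmBE subnn mnm0E.
Qed.

Lemma mderiv_lin_change A p j :
  (p \mPo lin_change A)^`M(j) = \sum_(i < m) A i j *: (p^`M(i) \mPo lin_change A).
Proof.
rewrite mderiv_comp_mpoly; apply: eq_bigr => i _.
by rewrite mderiv_lin_change_var mulrC mul_mpolyC.
Qed.

Lemma mderiv2_lin_change A p i j :
  (p \mPo lin_change A)^`M(j)^`M(i)
  = (\sum_(r < m) \sum_(q < m) (A r i * A q j) *: p^`M(q)^`M(r)) \mPo lin_change A.
Proof.
rewrite mderiv_lin_change raddf_sum exchange_big raddf_sum /=; apply: eq_bigr => q _.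
rewrite mderivZ mderiv_lin_change scaler_sumr raddf_sum /=; apply: eq_bigr => r _.
by rewrite scalerA comp_mpolyZ mulrC.
Qed.

Lemma comp_lin_change A B p :
  (p \mPo lin_change A) \mPo lin_change B = p \mPo lin_change (A *m B).
Proof.
rewrite comp_mpolyA; congr comp_mpoly; apply: eq_from_tnth => i.
rewrite tnth_mktuple !tnth_lin_change raddf_sum /=.
under eq_bigr do rewrite comp_mpolyZ comp_mpolyXU -tnth_nth tnth_lin_change scaler_sumr.
rewrite exchange_big /=; apply: eq_bigr => l _.
by rewrite mxE scaler_suml; apply: eq_bigr => j _; rewrite scalerA.
Qed.

Lemma lin_change1 : lin_change (1%:M : 'M[k]_m) = [tuple 'X_i | i < m].
Proof.
apply: eq_from_tnth => i; rewrite tnth_lin_change tnth_mktuple (bigD1 i) //=.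
rewrite big1 => [|j /negbTE neq]; first by rewrite mxE eqxx scale1r addr0.
by rewrite mxE eq_sym neq scale0r.
Qed.

Lemma lin_changeK A : A \in unitmx ->
  cancel (comp_mpoly (lin_change A)) (comp_mpoly (lin_change (invmx A))).
Proof. by move=> unitA p; rewrite comp_lin_change mulmxV // lin_change1 comp_mpoly_id. Qed.

Lemma meval_zero p : p.@[fun=> 0] = p@_0%MM.
Proof.
elim/mpolyind: p => [|c mu p _ _ IHp]; first by rewrite meval0 mcoeff0.
rewrite mevalD mcoeffD mevalZ mcoeffZ mevalX mcoeffX IHp; congr (_ * _ + _).
have [->|mu_neq0] := eqVneq mu 0%MM.
  by rewrite big1 // => i _; rewrite mnm0E expr0.
have [i mui_neq0] : exists i, mu i != 0%N.
  apply/existsP; apply: contraR mu_neq0 => /existsPn mu0.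
  by apply/eqP/mnmP => i; rewrite mnm0E; apply/eqP/negbNE.
by rewrite (bigD1 i) //= expr0n (negbTE mui_neq0) mul0r.
Qed.

Lemma mcoeff0_lin_change A p : (p \mPo lin_change A)@_0%MM = p@_0%MM.
Proof.
rewrite -!meval_zero comp_mpoly_meval; apply: meval_eq => i.
by rewrite tnth_lin_change raddf_sum big1 // => j _; rewrite /= mevalZ mevalXU mulr0.
Qed.

End LinearChange.

Section SplitProjection.
Variables (k : fieldType) (m : nat).
Implicit Types (A B C : 'M[k]_m) (I : {set 'I_m}).

Definition diag_set_mx I : 'M[k]_m := diag_mx (\row_i (i \in I)%:R).

Definition split_proj A I : 'M[k]_m := A *m diag_set_mx I *m invmx A.

Lemma diag_set_mx_commute B I : B^T = B ->
    (forall i j, i \in I -> j \notin I -> B i j = 0) ->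
  B *m diag_set_mx I = diag_set_mx I *m B.
Proof.
move=> symB B0; apply/matrixP => i j; rewrite mul_mx_diag mul_diag_mx !mxE.
case: (boolP (i \in I)) => iI; case: (boolP (j \in I)) => jI;
  rewrite ?mulr1 ?mul1r ?mulr0 ?mul0r //; first by rewrite B0.
by rewrite -symB mxE B0.
Qed.

Lemma split_proj_intertwine A C I : A \in unitmx -> C^T = C ->
    (forall i j, i \in I -> j \notin I -> (A^T *m C *m A) i j = 0) ->
  C *m split_proj A I = (split_proj A I)^T *m C.
Proof.
move=> unitA symC block; set B := A^T *m C *m A.
have symB : B^T = B by rewrite /B !trmx_mul trmxK symC mulmxA.
have unitAT : A^T \in unitmx by rewrite unitmx_tr.
have CE : C = invmx A^T *m B *m invmx A.
  by rewrite /B !mulmxA mulVmx // mul1mx mulmxK.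
have BD := diag_set_mx_commute symB block; clearbody B.
rewrite CE /split_proj /diag_set_mx !trmx_mul tr_diag_mx -/(diag_set_mx I) !trmx_inv.
rewrite !mulmxA (mulmxKV unitA) (mulmxK unitAT).
by rewrite -[_ *m B *m _ I]mulmxA BD mulmxA.
Qed.

Lemma split_proj_scalar A I c : A \in unitmx -> split_proj A I = c%:M ->
  forall i j, (i \in I) = (j \in I).
Proof.
move=> unitA Pc i j; have DE : diag_set_mx I = c%:M.
  have -> : diag_set_mx I = invmx A *m split_proj A I *m A.
    by rewrite /split_proj !mulmxA mulVmx // mul1mx mulmxKV.
  by rewrite Pc scalar_mxC -mulmxA mulVmx // mulmx1.
have := congr1 (fun M : 'M[k]_m => M i i == M j j) DE.
rewrite !mxE !eqxx /=.
by case: (i \in I); case: (j \in I); rewrite //= ?oner_eq0 1?eq_sym ?oner_eq0.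
Qed.

End SplitProjection.

Section Hessian.
Variables (k : fieldType) (m : nat).
Implicit Types (A : 'M[k]_m) (I : {set 'I_m}) (p : {mpoly k[m]}).

Definition hessian_coef p (mu : 'X_{1..m}) : 'M[k]_m :=
  \matrix_(r, q) (p^`M(q)^`M(r))@_mu.

Lemma trmx_hessian_coef p mu : (hessian_coef p mu)^T = hessian_coef p mu.
Proof. by apply/matrixP => r q; rewrite !mxE mderiv_comm. Qed.

Lemma hessian_coef_congruence A p mu i j :
  (A^T *m hessian_coef p mu *m A) i j
  = (\sum_(r < m) \sum_(q < m) (A r i * A q j) *: p^`M(q)^`M(r))@_mu.
Proof.
rewrite mxE raddf_sum /=; under [RHS]eq_bigr do rewrite raddf_sum.
rewrite [RHS]exchange_big /=; apply: eq_bigr => q _.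
rewrite mxE mulr_suml; apply: eq_bigr => r _.
by rewrite !mxE mcoeffZ mulrAC.
Qed.

Lemma only_vars_mderiv I p j : only_vars I p -> j \notin I -> p^`M(j) = 0.
Proof.
move=> pI jNI; apply/mpolyP => mu; rewrite mcoeff_mderiv mcoeff0.
suff -> : p@_(mu + U_(j)) = 0 by rewrite mul0rn.
apply/eqP; rewrite mcoeff_eq0; apply/negP => /pI /(_ j jNI).
by rewrite mnmDE mnm1E eqxx addn1.
Qed.

Lemma only_vars_set0 p : only_vars set0 p -> p = (p@_0%MM)%:MP.
Proof.
move=> p0; apply/mpolyP => mu; rewrite mcoeffC.
have [->|mu_neq0] := eqVneq mu 0%MM; first by rewrite mulr1.
rewrite mulr0; apply/eqP; rewrite mcoeff_eq0; apply: contra mu_neq0 => /p0 mu0.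
by apply/eqP/mnmP => i; rewrite mnm0E mu0 ?inE.
Qed.

Lemma constant_add_homog_eq0 p1 p2 d : only_vars set0 p1 -> p1 != 0 ->
  p2 \is d.-homog -> (p1 + p2)@_0%MM = 0 -> p1 + p2 = 0.
Proof.
move=> /only_vars_set0 p1E p1_neq0 p2_homog.
have c1_neq0 : p1@_0%MM != 0 by apply: contraNneq p1_neq0 => c1; rewrite p1E c1.
rewrite mcoeffD => /eqP; rewrite addr_eq0 => /eqP c12.
have c2_neq0 : p2@_0%MM != 0 by apply: contraNneq c1_neq0 => c2; rewrite c12 c2 oppr0.
have d0 : 0%N = d.
  move/dhomogP: p2_homog => /(_ 0%MM); rewrite mcoeff_msupp c2_neq0 => /(_ isT) <-.
  by apply/esym/eqP; rewrite /= mdeg_eq0.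
have p2_const : only_vars set0 p2.
  move=> mu mu_supp i _; move/dhomogP: p2_homog => /(_ mu mu_supp) /eqP.
  by rewrite -d0 mdeg_eq0 => /eqP ->; rewrite mnm0E.
by rewrite p1E (only_vars_set0 p2_const) c12 -mpolyCD addNr mpolyC0.
Qed.

Section Split.
Variables (A : 'M[k]_m) (I : {set 'I_m}) (f f1 f2 : {mpoly k[m]}).
Hypotheses (unitA : A \in unitmx) (f1I : only_vars I f1) (f2NI : only_vars (~: I) f2).
Hypothesis fA : f \mPo lin_change A = f1 + f2.

Lemma split_hessian_block mu i j : i \in I -> j \notin I ->
  (A^T *m hessian_coef f mu *m A) i j = 0.
Proof.
move=> iI jNI; rewrite hessian_coef_congruence.
set S := \sum_(r < m) _; suff -> : S = 0 by rewrite mcoeff0.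
rewrite -(lin_changeK unitA S) -mderiv2_lin_change fA.
rewrite !mderivD (only_vars_mderiv f1I jNI) mderiv0 add0r mderiv_comm.
by rewrite (only_vars_mderiv f2NI) ?mderiv0 ?comp_mpoly0 // inE negbK.
Qed.

Lemma split_proj_hessian mu :
  hessian_coef f mu *m split_proj A I = (split_proj A I)^T *m hessian_coef f mu.
Proof.
apply: split_proj_intertwine => //; first exact: trmx_hessian_coef.
exact: split_hessian_block.
Qed.

End Split.
End Hessian.

Section Matchings.
Variable N : nat.
Implicit Types (M : {set {set 'I_N}}) (S e : {set 'I_N}) (v : 'I_N).

Definition incidence M v : nat := #|[set e in M | v \in e]|.

Definition matching_on M S : Prop :=
  {in M, forall e, #|e| = 2%N} /\ forall v, incidence M v = (v \in S).

Lemma incidence0 v : incidence set0 v = 0%N.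
Proof. by apply/eqP; rewrite cards_eq0; apply/eqP/setP => e; rewrite !inE. Qed.

Lemma incidence_setU1 M e v : e \notin M ->
  incidence (e |: M) v = ((v \in e) + incidence M v)%N.
Proof.
move=> eNM; rewrite /incidence; case: (boolP (v \in e)) => ve.
  have -> : [set x in e |: M | v \in x] = e |: [set x in M | v \in x].
    by apply/setP => x; rewrite !inE; case: eqP => // ->; rewrite ve.
  by rewrite cardsU1 inE (negbTE eNM).
apply: eq_card => x; rewrite !inE.
by have [->|] := eqVneq x e; rewrite ?(negbTE ve) ?andbF.
Qed.

Lemma perfect_matchingP M : reflect (matching_on M setT) (perfect_matching M).
Proof.
apply: (iffP andP) => [[/forall_inP sizeM /forallP incM]|[sizeM incM]].
  by split=> [e /sizeM /eqP //|v]; rewrite inE; apply/eqP/incM.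
split; first by apply/forall_inP => e /sizeM ->.
by apply/forallP => v; rewrite -/(incidence M v) incM inE.
Qed.

Lemma matching_on_sub M S e : matching_on M S -> e \in M -> e \subset S.
Proof.
move=> [_ incM] eM; apply/subsetP => v ve; apply: contraLR isT => vNS.
have : incidence M v == 0%N by rewrite incM (negbTE vNS).
by rewrite cards_eq0 => /eqP/setP/(_ e); rewrite !inE eM ve.
Qed.

Lemma matching_on_setU1 M S e : matching_on M S -> #|e| = 2%N -> [disjoint e & S] ->
  matching_on (e |: M) (e :|: S).
Proof.
move=> matchM sizee eS; have [sizeM incM] := matchM.
have eNM : e \notin M.
  apply: contraTN eS => /(matching_on_sub matchM) eS.
  by rewrite -setI_eq0 (setIidPl eS) -card_gt0 sizee.
split=> [x|v]; first by case/setU1P=> [->|/sizeM].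
rewrite incidence_setU1 // incM inE.
by case: (boolP (v \in e)) => // ve; rewrite (disjointFr eS ve).
Qed.

Lemma matching_on_exists t S : #|S| = t.*2 -> exists M, matching_on M S.
Proof.
elim: t S => [|t IHt] S cardS.
  exists set0; split=> [e|v]; first by rewrite inE.
  by move/eqP: cardS; rewrite cards_eq0 => /eqP ->; rewrite inE incidence0.
have /card_gt1P[a [b [aS bS neq_ab]]] : (1 < #|S|)%N by rewrite cardS doubleS.
set e := [set a; b]; have eS : e \subset S by rewrite subUset !sub1set aS bS.
have sizee : #|e| = 2%N by rewrite cards2 neq_ab.
have [M matchM] : exists M, matching_on M (S :\: e).
  by apply: IHt; rewrite cardsDS // sizee cardS doubleS !subSS subn0.
exists (e |: M); rewrite -[S in matching_on _ S](setID S e) (setIidPr eS).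
apply: matching_on_setU1; rewrite // disjoints_subset.
by apply/subsetP => x xe; rewrite in_setC in_setD xe.
Qed.

Lemma perfect_matching_setU2 M W e1 e2 : matching_on M (~: W) ->
    #|e1| = 2%N -> #|e2| = 2%N -> e1 \notin e2 |: M -> e2 \notin M ->
  perfect_matching (e1 |: (e2 |: M)) = [disjoint e1 & e2] && (e1 :|: e2 == W).
Proof.
move=> [sizeM incM] size1 size2 e1N e2N.
have incE v :
    incidence (e1 |: (e2 |: M)) v = ((v \in e1) + (v \in e2) + (v \notin W))%N.
  by rewrite incidence_setU1 // incidence_setU1 // incM inE addnA.
have sizeE : {in e1 |: (e2 |: M), forall e, #|e| = 2%N}.
  by move=> e /setU1P[->|/setU1P[->|/sizeM]].
apply/perfect_matchingP/andP => [[_ inc1]|[dis12 /eqP W12]].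
  split; [rewrite -setI_eq0; apply/eqP/setP | apply/eqP/setP] => v;
    by move: (inc1 v); rewrite incE !inE; case: (v \in e1); case: (v \in e2); case: (v \in W).
split=> // v; rewrite incE -W12 !inE.
have := disjointFr dis12 (x := v).
by case: (v \in e1); case: (v \in e2) => // /(_ isT).
Qed.

End Matchings.

Section EdgeVariables.
Variable N : nat.
Implicit Types (M : {set {set 'I_N}}) (e : {set 'I_N}) (i p q : 'I_(nvars N)).

Definition edge_of i : {set 'I_N} := val (enum_val i : edge N).

Lemma edge_of_inj : injective edge_of.
Proof. by move=> i j /val_inj /enum_val_inj. Qed.

Lemma card_edge_of i : #|edge_of i| = 2%N.
Proof. exact/eqP/(valP (enum_val i : edge N)). Qed.

Lemma edge_of_surj e : #|e| = 2%N -> exists i, edge_of i = e.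
Proof.
move=> /eqP sizee; exists (enum_rank (Sub e sizee : edge N)).
by rewrite /edge_of enum_rankK.
Qed.

Lemma xe_edge_of (k : fieldType) i : xe k (edge_of i) = 'X_i.
Proof. by rewrite /xe /edge_of valK /= enum_valK. Qed.

Definition matching_mnm M : 'X_{1..nvars N} :=
  [multinom (edge_of i \in M : nat) | i < nvars N].

Lemma matching_mnmE M i : matching_mnm M i = (edge_of i \in M).
Proof. by rewrite mnmE. Qed.

Lemma matching_mnm_setU1 M p : edge_of p \notin M ->
  matching_mnm (edge_of p |: M) = (matching_mnm M + U_(p))%MM.
Proof.
move=> pNM; apply/mnmP => i; rewrite mnmDE mnm1E !matching_mnmE in_setU1.
have [<-|neq_pi] := eqVneq p i; first by rewrite eqxx (negbTE pNM).
by rewrite (inj_eq edge_of_inj) eq_sym (negbTE neq_pi) addn0.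
Qed.

Lemma matching_mnm_inj M1 M2 :
    {in M1, forall e, #|e| = 2%N} -> {in M2, forall e, #|e| = 2%N} ->
  matching_mnm M1 = matching_mnm M2 -> M1 = M2.
Proof.
move=> size1 size2 eqM; apply/setP => e.
have [/eqP/edge_of_surj[i <-]|e_not2] := boolP (#|e| == 2%N).
  by move/mnmP/(_ i): eqM; rewrite !matching_mnmE; case: (_ \in M1); case: (_ \in M2).
have eNM (X : {set {set 'I_N}}) : {in X, forall e, #|e| = 2%N} -> e \in X = false.
  by move=> sizeX; apply: contraNF e_not2 => /sizeX ->.
by rewrite !eNM.
Qed.

Lemma matching_mnm_eq_addU2 M M' p q :
    {in M, forall e, #|e| = 2%N} -> {in M', forall e, #|e| = 2%N} ->
    matching_mnm M = (matching_mnm M' + U_(p) + U_(q))%MM ->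
  [/\ edge_of p \notin edge_of q |: M', edge_of q \notin M'
    & M = edge_of p |: (edge_of q |: M')].
Proof.
move=> sizeM sizeM' eqM.
have mnmM i : (edge_of i \in M : nat) = ((edge_of i \in M') + (p == i) + (q == i))%N.
  by move/mnmP/(_ i): eqM; rewrite !mnmDE !mnm1E !matching_mnmE.
have [pNM' neq_qp] : edge_of p \notin M' /\ q != p.
  by move: (mnmM p); rewrite eqxx; case: (_ \in M); case: (_ \in M'); case: (q == p).
have qNM' : edge_of q \notin M'.
  by move: (mnmM q); rewrite eqxx; case: (_ \in M); case: (_ \in M'); case: (p == q).
have pNqM' : edge_of p \notin edge_of q |: M'.
  by rewrite in_setU1 (inj_eq edge_of_inj) eq_sym (negbTE neq_qp).
split=> //; apply: matching_mnm_inj => //.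
  by move=> e /setU1P[->|/setU1P[->|/sizeM']]; rewrite ?card_edge_of.
by rewrite !matching_mnm_setU1 // eqM -!addmA [(U_(q) + _)%MM]addmC.
Qed.

End EdgeVariables.

Section MatchingPoly.
Variables (k : fieldType) (N : nat) (a : {set {set 'I_N}} -> k).
Implicit Types (M : {set {set 'I_N}}) (e : {set 'I_N}) (i p q : 'I_(nvars N)).
Implicit Types (mu : 'X_{1..nvars N}).
Local Notation f := (matching_poly a).

Lemma size_perfect_matching M : perfect_matching M -> {in M, forall e, #|e| = 2%N}.
Proof. by case/perfect_matchingP. Qed.

Lemma prod_xe M : {in M, forall e, #|e| = 2%N} ->
  \prod_(e in M) xe k e = 'X_[matching_mnm M].
Proof.
move=> sizeM; rewrite mpolyXE_id.
have -> : \prod_(i < nvars N) 'X_i ^+ matching_mnm M i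
         = \prod_(i in [set i | edge_of i \in M]) xe k (edge_of i).
  rewrite [RHS]big_mkcond; apply: eq_bigr => i _.
  by rewrite matching_mnmE inE xe_edge_of; case: (_ \in M).
rewrite -(big_imset _ (in2W (@edge_of_inj N))); apply: eq_bigl => e.
apply/idP/imsetP => [eM|[i]]; last by rewrite inE => ? ->.
by have [i ie] := edge_of_surj (sizeM e eM); exists i; rewrite ?inE ie.
Qed.

Lemma mcoeff_matching_poly mu :
  f@_mu = \sum_(M | perfect_matching M) a M * (matching_mnm M == mu)%:R.
Proof.
rewrite /matching_poly raddf_sum /=; apply: eq_bigr => M /size_perfect_matching sizeM.
by rewrite mcoeffZ prod_xe ?mcoeffX.
Qed.

Lemma mcoeff_matching_poly_mnm M : perfect_matching M -> f@_(matching_mnm M) = a M.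
Proof.
move=> pmM; rewrite mcoeff_matching_poly (bigD1 M) //= eqxx mulr1 big1 ?addr0 //.
move=> M' /andP[pmM' neq_M'M]; case: eqP => [eq_mnm|_]; last by rewrite mulr0.
have sizeM := size_perfect_matching pmM; have sizeM' := size_perfect_matching pmM'.
by move: neq_M'M; rewrite (matching_mnm_inj sizeM' sizeM eq_mnm) eqxx.
Qed.

Lemma mcoeff_matching_poly_neq0 mu : f@_mu != 0 ->
  exists2 M, perfect_matching M & matching_mnm M = mu.
Proof.
rewrite mcoeff_matching_poly => coef_neq0.
have [/existsP[M /andP[pmM /eqP <-]]|noM] :=
  boolP [exists M : {set {set 'I_N}}, perfect_matching M && (matching_mnm M == mu)].
  by exists M.
move: coef_neq0; rewrite big1 ?eqxx // => M pmM.
by move/existsPn/(_ M): noM; rewrite pmM /= => /negbTE ->; rewrite mulr0.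
Qed.

Lemma mcoeff0_matching_poly : (0 < N)%N -> f@_0%MM = 0.
Proof.
move=> N_gt0; apply: contraTeq isT => /mcoeff_matching_poly_neq0[M pmM mnmM0].
have M0 : M = set0.
  apply: matching_mnm_inj (size_perfect_matching pmM) _ _ => [e|]; first by rewrite inE.
  by rewrite mnmM0; apply/mnmP => i; rewrite matching_mnmE inE mnm0E.
case/perfect_matchingP: pmM => _ /(_ (Ordinal N_gt0)); rewrite M0 inE.
by rewrite incidence0.
Qed.

Lemma hessian_coef_matching_poly M' W p q :
    (forall M, perfect_matching M -> a M != 0) -> matching_on M' (~: W) ->
  (hessian_coef f (matching_mnm M') p q != 0)
  = [disjoint edge_of p & edge_of q] && (edge_of p :|: edge_of q == W).
Proof.
move=> a_neq0 matchM'; set mu := matching_mnm M'.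
have hessE : hessian_coef f mu p q
             = f@_(mu + U_(p) + U_(q)) *+ ((mu + U_(p))%MM q).+1 *+ (mu p).+1.
  by rewrite mxE !mcoeff_mderiv.
apply/idP/idP => [hess_neq0|/andP[dis_pq /eqP Wpq]].
  have : f@_(mu + U_(p) + U_(q)) != 0.
    by apply: contraNneq hess_neq0 => coef0; rewrite hessE coef0 !mul0rn.
  case/mcoeff_matching_poly_neq0 => M pmM mnmM.
  have [pN qN Mdef] := matching_mnm_eq_addU2 (size_perfect_matching pmM) matchM'.1 mnmM.
  have := perfect_matching_setU2 matchM' (card_edge_of p) (card_edge_of q) pN qN.
  by rewrite -Mdef pmM => <-.
have edge_neq0 i : exists v, v \in edge_of i by apply/card_gt0P; rewrite card_edge_of.
have edgeNM' i : edge_of i \subset W -> edge_of i \notin M'.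
  move=> iW; apply/negP => iM'; have iNW := matching_on_sub matchM' iM'.
  have [v vi] := edge_neq0 i.
  by move: (subsetP iW v vi) (subsetP iNW v vi); rewrite inE => ->.
have qNM' : edge_of q \notin M' by rewrite edgeNM' // -Wpq subsetUr.
have neq_pq : edge_of p != edge_of q.
  have [v vp] := edge_neq0 p; apply/eqP => eq_pq.
  by move: (disjointFr dis_pq vp); rewrite -eq_pq vp.
have pN : edge_of p \notin edge_of q |: M'.
  by rewrite in_setU1 negb_or neq_pq edgeNM' // -Wpq subsetUl.
have pmM := perfect_matching_setU2 matchM' (card_edge_of p) (card_edge_of q) pN qNM'.
rewrite dis_pq Wpq eqxx /= in pmM.
have mnmE : (mu + U_(p) + U_(q))%MM = matching_mnm (edge_of p |: (edge_of q |: M')).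
  by rewrite !matching_mnm_setU1 // -!addmA [(U_(q) + _)%MM]addmC.
rewrite hessE mnmE mcoeff_matching_poly_mnm // mnmDE mnm1E !matching_mnmE.
rewrite (negbTE qNM') (negbTE (contraNN (fun h => setU1r _ h) pN)).
have /negbTE -> : p != q by apply: contra_neq neq_pq => ->.
by rewrite !mulr1n a_neq0.
Qed.

End MatchingPoly.

Section EdgePairs.
Variable N : nat.
Implicit Types (r s t p q : 'I_(nvars N)) (X : {set 'I_N}).

Lemma exists_edge_disjoint2 r t : (6 <= N)%N ->
  exists s, [disjoint edge_of r & edge_of s] /\ [disjoint edge_of t & edge_of s].
Proof.
move=> N6; have : (1 < #|~: (edge_of r :|: edge_of t)|)%N.
  have := cardsUI (edge_of r) (edge_of t); have := cardsC (edge_of r :|: edge_of t).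
  by rewrite card_ord !card_edge_of; lia.
case/card_gt1P => c [d [cN dN neq_cd]].
have [s sE] : exists s, edge_of s = [set c; d].
  by apply: edge_of_surj; rewrite cards2 neq_cd.
exists s; rewrite sE; move: cN dN; rewrite !inE !negb_or => /andP[cr ct] /andP[dr dt].
split; rewrite disjoint_sym disjoints_subset.
  all: by apply/subsetP => v; rewrite !inE => /orP[]/eqP->.
Qed.

Lemma edge_of_sub_setU r s X : [disjoint edge_of r & X] ->
  edge_of r \subset edge_of s :|: X -> r = s.
Proof.
move=> disX rsX; apply: edge_of_inj; apply/eqP; rewrite eqEcard !card_edge_of leqnn andbT.
by apply/subsetP => v vr; move: (subsetP rsX v vr); rewrite inE (disjointFr disX vr) orbF.
Qed.

Lemma edge_pair_intertwine_scalar (k : fieldType) (P : 'M[k]_(nvars N)) : (6 <= N)%N ->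
    (forall r s, [disjoint edge_of r & edge_of s] ->
       exists2 C : 'M[k]_(nvars N), C *m P = P^T *m C &
         forall p q, (C p q != 0) = [disjoint edge_of p & edge_of q]
                                    && (edge_of p :|: edge_of q == edge_of r :|: edge_of s)) ->
  forall r0, P = (P r0 r0)%:M.
Proof.
move=> N6 intertwine.
have entry C r s : C *m P = P^T *m C ->
    \sum_q C r q * P q s = \sum_p P p r * C p s.
  by move/matrixP/(_ r s); rewrite !mxE; under [RHS]eq_bigr do rewrite mxE.
(* With C chosen for the pair (s', s), row r of C vanishes and the only nonzero entry of
   column s of C is at s', so entry (r, s) of C P = P^T C reads 0 = P s' r * C s' s. *)
have offdiag s' r : s' != r -> P s' r = 0.
  move=> neq_s'r; have [s [dis_s's dis_rs]] := exists_edge_disjoint2 s' r N6.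
  have [C CP suppC] := intertwine s' s dis_s's.
  move: (entry C r s CP); rewrite big1 => [|q _]; last first.
    have [->|] := eqVneq (C r q) 0; first by rewrite mul0r.
    rewrite suppC => /andP[_ /eqP Ers]; case/eqP: neq_s'r.
    by apply: esym; apply: (edge_of_sub_setU dis_rs); rewrite -Ers subsetUl.
  rewrite (bigD1 s') //= big1 => [|p neq_ps']; last first.
    have [->|] := eqVneq (C p s) 0; first by rewrite mulr0.
    rewrite suppC => /andP[dis_ps /eqP Eps]; case/eqP: neq_ps'.
    by apply: (edge_of_sub_setU dis_ps); rewrite -Eps subsetUl.
  have Cs's_neq0 : C s' s != 0 by rewrite suppC dis_s's eqxx.
  by move/esym/eqP; rewrite addr0 mulf_eq0 (negbTE Cs's_neq0) orbF => /eqP.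
have diag r s : [disjoint edge_of r & edge_of s] -> P r r = P s s.
  move=> dis_rs; have [C CP suppC] := intertwine r s dis_rs.
  have Crs_neq0 : C r s != 0 by rewrite suppC dis_rs eqxx.
  move: (entry C r s CP); rewrite (bigD1 s) //= big1 => [|q neq_qs]; last first.
    by rewrite offdiag ?mulr0.
  rewrite (bigD1 r) //= big1 => [|p neq_pr]; last by rewrite offdiag ?mul0r.
  by rewrite !addr0 mulrC => /(mulIf Crs_neq0).
move=> r0; apply/matrixP => r s; rewrite mxE.
have [<-|neq_rs] := eqVneq r s; last by rewrite offdiag ?mulr0n.
have [t [dis_rt dis_r0t]] := exists_edge_disjoint2 r r0 N6.
by rewrite mulr1n (diag _ _ dis_rt) (diag _ _ dis_r0t).
Qed.

End EdgePairs.

Section MatchingPolyNotDirectSum.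
Variables (k : fieldType) (n : nat) (a : {set {set 'I_(2 * n)}} -> k).
Hypotheses (n_ge3 : (3 <= n)%N) (a_neq0 : forall M, perfect_matching M -> a M != 0).
Local Notation N := (2 * n)%N.
Local Notation f := (matching_poly a).

Lemma exists_perfect_matching : exists M : {set {set 'I_N}}, perfect_matching M.
Proof.
have [M matchM] : exists M, matching_on M [set: 'I_N].
  by apply: (@matching_on_exists _ n); rewrite cardsT card_ord -mul2n.
by exists M; apply/perfect_matchingP.
Qed.

Lemma lin_change_matching_poly_neq0 A : A \in unitmx -> f \mPo lin_change A != 0.
Proof.
move=> unitA; apply: contraTneq isT => fA0; have [M pmM] := exists_perfect_matching.
have f0 : f = 0 by rewrite -(lin_changeK unitA f) fA0 comp_mpoly0.
by move: (a_neq0 pmM); rewrite -(mcoeff_matching_poly_mnm a pmM) f0 mcoeff0 eqxx.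
Qed.

Lemma split_proj_matching_poly_scalar A I f1 f2 :
    A \in unitmx -> only_vars I f1 -> only_vars (~: I) f2 ->
    f \mPo lin_change A = f1 + f2 ->
  forall i, split_proj A I = (split_proj A I i i)%:M.
Proof.
move=> unitA f1I f2NI fA; apply: edge_pair_intertwine_scalar; first lia.
move=> r s dis_rs; set W := edge_of r :|: edge_of s.
have [M' matchM'] : exists M', matching_on M' (~: W).
  apply: (@matching_on_exists _ (n - 2)); have := cardsC W.
  by rewrite card_ord cardsU (disjoint_setI0 dis_rs) cards0 !card_edge_of; lia.
exists (hessian_coef f (matching_mnm M')).
  exact (split_proj_hessian unitA f1I f2NI fA (matching_mnm M')).
by move=> p q; rewrite (hessian_coef_matching_poly _ _ a_neq0 matchM').
Qed.

End MatchingPolyNotDirectSum.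

Unset Implicit Arguments.

Theorem corollary5p8 (k : fieldType) (n : nat) (hn : (3 <= n)%N)
  (hk : exists x : k, x != 0 /\ x != 1)
  (a : {set {set 'I_(2 * n)}} -> k)
  (ha : forall M, perfect_matching M -> a M != 0) :
  ~ direct_sum (matching_poly a).
Proof.
move=> [A [I [f1 [f2 [d1 [d2 [unitA [f1_neq0 [f2_neq0 [homog1 [homog2 [f1I [f2NI fA]]]]]]]]]]]]].
have fA_neq0 := lin_change_matching_poly_neq0 ha unitA.
have fA0 : (matching_poly a \mPo lin_change A)@_0%MM = 0.
  by rewrite mcoeff0_lin_change mcoeff0_matching_poly //; lia.
have [I0|[i iI]] := set_0Vmem I.
  rewrite I0 in f1I; move: fA_neq0.
  by rewrite fA (constant_add_homog_eq0 f1I f1_neq0 homog2) ?eqxx // -fA.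
have [NI0|[j jNI]] := set_0Vmem (~: I).
  rewrite NI0 in f2NI; move: fA_neq0.
  by rewrite fA addrC (constant_add_homog_eq0 f2NI f2_neq0 homog1) ?eqxx // addrC -fA.
have Pscalar := split_proj_matching_poly_scalar hn ha unitA f1I f2NI fA i.
have := split_proj_scalar unitA Pscalar i j.
by rewrite iI; move: jNI; rewrite inE => /negbTE ->.
Qed.
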